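(* Let $\Bbbk$ be a field, let $\mathrm{Var}$ be a variety of $\Bbbk$-algebras with one binary product defined by a set of polylinear identities, and let $\text{tri-}\mathrm{Var}$ be the corresponding replicated variety of tri-algebras. Let $X$ be a set, $\dot X=\{\dot x\mid x\in X\}$ a disjoint copy of $X$, $F=\mathrm{Var}\langle X\cup\dot X\rangle$ the free algebra of $\mathrm{Var}$ on $X\cup\dot X$, and $\varphi:F\to F$ the unique algebra homomorphism with $\varphi(x)=x$, $\varphi(\dot x)=x$ for $x\in X$. Define on the space $F$ three binary operations $$f\vdash g=\varphi(f)g,\qquad f\dashv g=f\varphi(g),\qquad f\perp g=fg\qquad (f,g\in F),$$ and denote the resulting system by $F^{(3)}$. Then $F^{(3)}$ belongs to $\text{tri-}\mathrm{Var}$.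
   Context: Tri-algebras: linear spaces with three bilinear operations $\dashv$ (=$\mu_{\{1\}}$), $\vdash$ (=$\mu_{\{2\}}$), $\perp$ (=$\mu_{\{1,2\}}$), obtained by replicating the product $\mu$ of $\mathrm{Var}$ (writing $\mu_H$ for $H\subseteq\{1,2\}$ nonempty). For a polylinear element $\Phi(x_1,\dots,x_n)$ of the free (magmatic) algebra in one binary operation and a nonempty $H\subseteq\{1,\dots,n\}$, $\Phi_H$ is obtained as follows: view each monomial of $\Phi$ as a binary rooted tree with leaves labelled $x_1,\dots,x_n$ and internal nodes labelled $\mu$; mark the leaves $x_i$, $i\in H$; at each node let $S\subseteq\{1,2\}$ be the set of its branches (left=1, right=2) whose subtrees contain a marked leaf, and replace $\mu$ by $\mu_S$ if $S\neq\varnothing$, by $\mu_{\{1\}}$ if $S=\varnothing$. The variety $\text{tri-}\mathrm{Var}$ consists of all tri-algebras satisfying (i) $(a* b)\vdash c=(a\star b)\vdash c$ and $a\dashv(b* c)=a\dashv(b\star c)$ for all $*,\star\in\{\vdash,\dashv,\perp\}$, and (ii) $\Phi_H=0$ for every defining polylinear identity $\Phi$ of $\mathrm{Var}$ of degree $n$ and every nonempty $H\subseteq\{1,\dots,n\}$. *)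

From HB Require Import structures.
From mathcomp Require Import all_boot all_algebra.
Set Implicit Arguments. Unset Strict Implicit. Unset Printing Implicit Defensive.
Import GRing.Theory.
Local Open Scope ring_scope.

(* Monomials of the free magmatic algebra: binary rooted trees whose leaves are
   labelled by variable indices (x_1,...,x_n is encoded as 0,...,n-1). *)
Inductive mterm : Type :=
| MVar of nat
| MMul of mterm & mterm.

Fixpoint leaves (t : mterm) : seq nat :=
  match t with
  | MVar i => [:: i]
  | MMul t1 t2 => leaves t1 ++ leaves t2
  end.

Definition polylin_mon (n : nat) (t : mterm) : bool := perm_eq (leaves t) (iota 0 n).

(* an element of the free magmatic algebra: a finite linear combination of monomials *)
Definition mpoly_elt (k : fieldType) := seq (k * mterm).

Definition polylinear (k : fieldType) (n : nat) (Phi : mpoly_elt k) : Prop :=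
  all (fun p : k * mterm => polylin_mon n p.2) Phi.

Definition bilinear_op (k : fieldType) (A : lmodType k) (m : A -> A -> A) : Prop :=
  (forall (r : k) (a b c : A), m (r *: a + b) c = r *: m a c + m b c) /\
  (forall (r : k) (a b c : A), m a (r *: b + c) = r *: m a b + m a c).

Fixpoint eval_mon (A : Type) (m : A -> A -> A) (a : nat -> A) (t : mterm) : A :=
  match t with
  | MVar i => a i
  | MMul t1 t2 => m (eval_mon m a t1) (eval_mon m a t2)
  end.

Definition eval_elt (k : fieldType) (A : lmodType k) (m : A -> A -> A)
  (a : nat -> A) (Phi : mpoly_elt k) : A :=
  \sum_(p <- Phi) p.1 *: eval_mon m a p.2.

(* A set of defining polylinear identities: ids n Phi means Phi is a defining
   identity of degree n. *)
Definition polylin_ids (k : fieldType) (ids : nat -> mpoly_elt k -> Prop) : Prop :=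
  forall n Phi, ids n Phi -> polylinear n Phi.

Definition in_Var (k : fieldType) (ids : nat -> mpoly_elt k -> Prop)
  (A : lmodType k) (m : A -> A -> A) : Prop :=
  bilinear_op m /\
  forall n Phi, ids n Phi -> forall a : nat -> A, eval_elt m a Phi = 0.

Definition alg_hom (k : fieldType) (A B : lmodType k) (mA : A -> A -> A)
  (mB : B -> B -> B) (h : A -> B) : Prop :=
  (forall (r : k) (a b : A), h (r *: a + b) = r *: h a + h b) /\
  (forall a b : A, h (mA a b) = mB (h a) (h b)).

Definition is_free_Var (k : fieldType) (ids : nat -> mpoly_elt k -> Prop)
  (G : Type) (F : lmodType k) (mF : F -> F -> F) (iota : G -> F) : Prop :=
  in_Var ids mF /\
  forall (A : lmodType k) (mA : A -> A -> A), in_Var ids mA ->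
    forall g : G -> A,
      (exists h : F -> A, alg_hom mF mA h /\ forall x, h (iota x) = g x) /\
      (forall h1 h2 : F -> A, alg_hom mF mA h1 -> alg_hom mF mA h2 ->
         (forall x, h1 (iota x) = g x) -> (forall x, h2 (iota x) = g x) ->
         forall f, h1 f = h2 f).

(* Replication Phi_H: evaluation of a monomial in a tri-algebra
   (dashv = mu_{1}, vdash = mu_{2}, perp = mu_{1,2}) with marked leaves H. *)
Fixpoint eval_mon_H (A : Type) (dashv vdash perp : A -> A -> A) (H : pred nat)
  (a : nat -> A) (t : mterm) : A :=
  match t with
  | MVar i => a i
  | MMul t1 t2 =>
      let u := eval_mon_H dashv vdash perp H a t1 in
      let v := eval_mon_H dashv vdash perp H a t2 in
      match has H (leaves t1), has H (leaves t2) with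
      | true, true => perp u v
      | true, false => dashv u v
      | false, true => vdash u v
      | false, false => dashv u v
      end
  end.

Definition eval_elt_H (k : fieldType) (A : lmodType k) (dashv vdash perp : A -> A -> A)
  (H : pred nat) (a : nat -> A) (Phi : mpoly_elt k) : A :=
  \sum_(p <- Phi) p.1 *: eval_mon_H dashv vdash perp H a p.2.

Definition in_triVar (k : fieldType) (ids : nat -> mpoly_elt k -> Prop)
  (A : lmodType k) (dashv vdash perp : A -> A -> A) : Prop :=
  [/\ bilinear_op dashv, bilinear_op vdash, bilinear_op perp,
      (forall o1 o2 : A -> A -> A,
         (o1 = vdash \/ o1 = dashv \/ o1 = perp) ->
         (o2 = vdash \/ o2 = dashv \/ o2 = perp) ->
         forall a b c : A,
           vdash (o1 a b) c = vdash (o2 a b) c /\ dashv a (o1 b c) = dashv a (o2 b c))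
    & (forall n Phi, ids n Phi ->
         forall H : pred nat, (exists i, (i < n)%N /\ H i) ->
         forall a : nat -> A, eval_elt_H dashv vdash perp H a Phi = 0)].

From mathcomp Require Import all_boot all_algebra.
Set Implicit Arguments. Unset Strict Implicit. Unset Printing Implicit Defensive.
Import GRing.Theory.
Local Open Scope ring_scope.

(* The endomorphism phi of F is idempotent: phi o phi and phi agree on the
   generators, hence everywhere by freeness.  Consequently phi maps each of the
   three products f g, f phi(g), phi(f) g to phi(f) phi(g), which gives the
   axioms (i).  For the identities, fix a marking H and values a_i; put
   b_i = a_i for marked i and b_i = phi(a_i) otherwise.  By induction on a
   monomial t containing a marked leaf, its replicated evaluation at a equals
   its ordinary evaluation in F at b: an unmarked branch only ever meets phi
   through its image phi(t(a)) = t(phi a) = t(b).  Hence Phi_H(a) = Phi(b) = 0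
   because F lies in Var. *)

Lemma eq_eval_mon (A : Type) (m : A -> A -> A) (f g : nat -> A) (t : mterm) :
  {in leaves t, f =1 g} -> eval_mon m f t = eval_mon m g t.
Proof.
elim: t => [i|t1 IH1 t2 IH2] /= fg; first by apply: fg; rewrite inE.
by rewrite IH1 ?IH2 // => i ti; apply: fg; rewrite mem_cat ti ?orbT.
Qed.

Lemma alg_hom_comp (k : fieldType) (A B C : lmodType k) (mA : A -> A -> A)
    (mB : B -> B -> B) (mC : C -> C -> C) (g : B -> C) (h : A -> B) :
  alg_hom mB mC g -> alg_hom mA mB h -> alg_hom mA mC (fun a => g (h a)).
Proof.
by move=> [g_lin g_mul] [h_lin h_mul]; split=> [r a b|a b];
  rewrite ?h_lin ?g_lin ?h_mul ?g_mul.
Qed.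

Lemma free_hom_idem (k : fieldType) (ids : nat -> mpoly_elt k -> Prop)
    (G : Type) (F : lmodType k) (mF : F -> F -> F) (iota : G -> F)
    (phi : F -> F) :
  is_free_Var ids mF iota -> alg_hom mF mF phi ->
  (forall x, phi (phi (iota x)) = phi (iota x)) ->
  forall f, phi (phi f) = phi f.
Proof.
move=> [FVar Funiv] hom_phi phi_idem_gen.
have [_ hom_uniq] := Funiv F mF FVar (fun x => phi (iota x)).
exact: hom_uniq (alg_hom_comp hom_phi hom_phi) hom_phi phi_idem_gen (fun=> erefl).
Qed.

Section BilinearTwisted.
Variables (k : fieldType) (A : lmodType k) (m : A -> A -> A) (h : A -> A).
Hypothesis m_bilin : bilinear_op m.
Hypothesis h_lin : forall (r : k) (a b : A), h (r *: a + b) = r *: h a + h b.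

Lemma bilinear_op_compl : bilinear_op (fun f g => m (h f) g).
Proof. by case: m_bilin => ml mr; split=> r a b c; rewrite ?h_lin ?ml ?mr. Qed.

Lemma bilinear_op_compr : bilinear_op (fun f g => m f (h g)).
Proof. by case: m_bilin => ml mr; split=> r a b c; rewrite ?h_lin ?ml ?mr. Qed.

End BilinearTwisted.

Section Replication.
Variables (k : fieldType) (F : lmodType k) (mF : F -> F -> F) (phi : F -> F).
Hypothesis phi_mul : forall f g, phi (mF f g) = mF (phi f) (phi g).
Hypothesis phi_idem : forall f, phi (phi f) = phi f.

Local Notation dashv := (fun f g => mF f (phi g)).
Local Notation vdash := (fun f g => mF (phi f) g).

Lemma phi_tri_op (o : F -> F -> F) :
  o = vdash \/ o = dashv \/ o = mF ->
  forall f g, phi (o f g) = mF (phi f) (phi g).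
Proof. by move=> [->|[->|->]] f g; rewrite phi_mul ?phi_idem. Qed.

Variables (H : pred nat) (a : nat -> F).

Definition marked_subst (i : nat) : F := if H i then a i else phi (a i).

Lemma phi_eval_mon_H (t : mterm) :
  phi (eval_mon_H dashv vdash mF H a t) = eval_mon mF (fun i => phi (a i)) t.
Proof.
elim: t => [|t1 IH1 t2 IH2] //=.
by case: (has H _); case: (has H _); rewrite phi_mul ?phi_idem IH1 IH2.
Qed.

Lemma eval_mon_unmarked (t : mterm) : ~~ has H (leaves t) ->
  eval_mon mF (fun i => phi (a i)) t = eval_mon mF marked_subst t.
Proof.
move=> /hasPn unmarked; apply: eq_eval_mon => i /unmarked Hi.
by rewrite /marked_subst (negbTE Hi).
Qed.

Lemma eval_mon_H_marked (t : mterm) : has H (leaves t) ->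
  eval_mon_H dashv vdash mF H a t = eval_mon mF marked_subst t.
Proof.
elim: t => [i|t1 IH1 t2 IH2] /=; first by rewrite /marked_subst orbF => ->.
rewrite has_cat; case h1: (has H _); case h2: (has H _) => //= _.
- by rewrite IH1 // IH2.
- by rewrite IH1 // phi_eval_mon_H eval_mon_unmarked ?h2.
- by rewrite IH2 // phi_eval_mon_H eval_mon_unmarked ?h1.
Qed.

Lemma eval_elt_H_marked (n : nat) (Phi : mpoly_elt k) :
  polylinear n Phi -> (exists i, (i < n)%N /\ H i) ->
  eval_elt_H dashv vdash mF H a Phi = eval_elt mF marked_subst Phi.
Proof.
move=> Phi_lin [i [lt_i_n Hi]]; rewrite /eval_elt_H /eval_elt.
elim: Phi Phi_lin => [|p Phi IH] /=; first by rewrite !big_nil.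
case/andP=> p_lin Phi_lin; rewrite !big_cons IH // eval_mon_H_marked //.
by apply/hasP; exists i; rewrite ?(perm_mem p_lin) ?mem_iota.
Qed.

End Replication.

(* X + X encodes X ∪ Ẋ : inl x = x, inr x = ẋ. *)
Theorem lemma3p1 (k : fieldType) (ids : nat -> mpoly_elt k -> Prop)
  (Hids : polylin_ids ids) (X : Type)
  (F : lmodType k) (mF : F -> F -> F) (iota : X + X -> F)
  (Hfree : is_free_Var ids mF iota)
  (phi : F -> F) (Hphi : alg_hom mF mF phi)
  (Hphi1 : forall x : X, phi (iota (inl x)) = iota (inl x))
  (Hphi2 : forall x : X, phi (iota (inr x)) = iota (inl x)) :
  in_triVar ids
    (fun f g => mF f (phi g))   (* f -| g = f phi(g) *)
    (fun f g => mF (phi f) g)   (* f |- g = phi(f) g *)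
    mF.                         (* f _|_ g = f g *)
Proof.
have [[mF_bilin F_ids] _] := Hfree.
have [phi_lin phi_mul] := Hphi.
have phi_idem : forall f, phi (phi f) = phi f.
  by apply: free_hom_idem Hfree Hphi _ => -[x|x]; rewrite ?Hphi2 Hphi1.
split.
- exact: bilinear_op_compr.
- exact: bilinear_op_compl.
- exact: mF_bilin.
- move=> o1 o2 o1_tri o2_tri f g h.
  have phi_o := phi_tri_op phi_mul phi_idem.
  by rewrite !(phi_o o1 o1_tri, phi_o o2 o2_tri).
- move=> n Phi Phi_id H H_marks a.
  rewrite (eval_elt_H_marked phi_mul phi_idem a (Hids _ _ Phi_id) H_marks).
  exact: F_ids Phi_id _.
Qed.
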